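(* Let $\mathcal M\subset{}^d\mathcal K$ be maximal isotropic. For any $\mathsf k>0$ the number of eigenvalues of $\mathfrak S(\mathsf k;\mathcal M)$ lying in the open upper (respectively lower) complex half-plane equals $n_+(\mathcal M)$ (respectively $n_-(\mathcal M)$). The number of real eigenvalues of $\mathfrak S(\mathsf k;\mathcal M)$ equals $n_0(\mathcal M)$.
   Context: $\mathcal K$ is a finite-dimensional Hilbert space, $\mathcal K\cong\mathbb C^{n}$ with $n=|\mathcal E|+2|\mathcal I|$, and ${}^d\mathcal K=\mathcal K\oplus\mathcal K$ carries the symplectic form $\omega(\chi,\chi')=\langle\chi,J\chi'\rangle$, $J=\begin{pmatrix}0&\mathbb I\\-\mathbb I&0\end{pmatrix}$. A subspace is maximal isotropic if $\omega$ vanishes on it and it is maximal with this property; these are exactly $\mathcal M(A,B)=\{\chi_1\oplus\chi_2:A\chi_1+B\chi_2=0\}$ with $A,B:\mathcal K\to\mathcal K$ linear, $(A,B):{}^d\mathcal K\to\mathcal K$ of rank $n$ and $AB^\dagger$ self-adjoint. For real $\mathsf k\neq0$, $A+i\mathsf kB$ is invertible and $\mathfrak S(\mathsf k;\mathcal M)=-(A+i\mathsf kB)^{-1}(A-i\mathsf kB)$ is unitary and depends only on $\mathcal M=\mathcal M(A,B)$. $n_+(\mathcal M),n_-(\mathcal M),n_0(\mathcal M)$ denote the numbers of positive, negative, zero eigenvalues (with multiplicity) of $AB^\dagger$, independent of the choice of $(A,B)$. *)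

From HB Require Import structures.
From mathcomp Require Import all_boot all_order all_algebra all_field.
Set Implicit Arguments. Unset Strict Implicit. Unset Printing Implicit Defensive.
Import Order.TTheory GRing.Theory Num.Theory.
Local Open Scope ring_scope.

Definition adjmx (C : numClosedFieldType) m n (A : 'M[C]_(m, n)) : 'M[C]_(n, m) := (map_mx Num.conj A)^T.

(* the eigenvalues of a square complex matrix, listed with algebraic
   multiplicity: a sequence rs with char_poly M = \prod_(z <- rs) ('X - z) *)
Definition eigseq (C : numClosedFieldType) n (M : 'M[C]_n) : seq C :=
  sval (closed_field_poly_normal (char_poly M)).

Definition eigcount (C : numClosedFieldType) n (M : 'M[C]_n) (P : pred C) : nat := count P (eigseq M).

Definition Smat (C : numClosedFieldType) n (A B : 'M[C]_n) (k : C) : 'M[C]_n :=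
  - (invmx (A + ('i * k) *: B) *m (A - ('i * k) *: B)).

(* (A,B) defines a maximal isotropic subspace M(A,B):
   rank of the n x 2n matrix (A B) is n, and A B^dagger is self-adjoint *)
Definition max_isotropic_data (C : numClosedFieldType) n (A B : 'M[C]_n) : Prop :=
  \rank (row_mx A B) = n /\ adjmx (A *m adjmx B) = A *m adjmx B.

Definition n_plus (C : numClosedFieldType) n (A B : 'M[C]_n) : nat := eigcount (A *m adjmx B) (fun z => 0 < z).
Definition n_minus (C : numClosedFieldType) n (A B : 'M[C]_n) : nat := eigcount (A *m adjmx B) (fun z => z < 0).
Definition n_zero (C : numClosedFieldType) n (A B : 'M[C]_n) : nat := eigcount (A *m adjmx B) (fun z => z == 0).

From HB Require Import structures.
From mathcomp Require Import all_boot all_order all_algebra all_field.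
From mathcomp Require Import zify ring.
Import Order.TTheory GRing.Theory Num.Theory Num.Def.
Local Open Scope ring_scope.
Local Open Scope sesquilinear_scope.
Set Implicit Arguments. Unset Strict Implicit. Unset Printing Implicit Defensive.

(* Put G = (A + ik B)^-1, which exists because w (A + ik B) = 0 forces the real number
   w A B^dagger w^dagger to equal -ik |w B|^2, hence w B = w A = 0.  With A1 = G A and
   B1 = G B we get A1 + ik B1 = 1 and S = -(A1 - ik B1) = 2ik B1 - 1; self-adjointness of
   A1 B1^dagger makes S unitary and gives (S - S^dagger) / 2i = 2k G (A B^dagger) G^dagger.
   As S is normal, the eigenvalues of (S - S^dagger) / 2i are the imaginary parts of those
   of S, and Sylvester's law of inertia transports the signs through the congruence. *)

Section Adjoint.
Variable C : numClosedFieldType.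

Lemma adjmxE m n (A : 'M[C]_(m, n)) : adjmx A = A ^t*.
Proof. by rewrite /adjmx map_trmx. Qed.

Lemma adjmxK m n (A : 'M[C]_(m, n)) : adjmx (adjmx A) = A.
Proof. by apply/matrixP=> i j; rewrite !mxE conjCK. Qed.

Lemma adjmxM m n p (A : 'M[C]_(m, n)) (B : 'M[C]_(n, p)) :
  adjmx (A *m B) = adjmx B *m adjmx A.
Proof. by rewrite /adjmx map_mxM trmx_mul. Qed.

Lemma adjmxD m n (A B : 'M[C]_(m, n)) : adjmx (A + B) = adjmx A + adjmx B.
Proof. by apply/matrixP=> i j; rewrite !mxE rmorphD. Qed.

Lemma adjmxN m n (A : 'M[C]_(m, n)) : adjmx (- A) = - adjmx A.
Proof. by apply/matrixP=> i j; rewrite !mxE rmorphN. Qed.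

Lemma adjmxB m n (A B : 'M[C]_(m, n)) : adjmx (A - B) = adjmx A - adjmx B.
Proof. by rewrite adjmxD adjmxN. Qed.

Lemma adjmxZ m n a (A : 'M[C]_(m, n)) : adjmx (a *: A) = a^* *: adjmx A.
Proof. by apply/matrixP=> i j; rewrite !mxE rmorphM. Qed.

Lemma adjmx1 n : adjmx (1%:M : 'M[C]_n) = 1%:M.
Proof. by apply/matrixP=> i j; rewrite !mxE rmorph_nat eq_sym. Qed.

Lemma adjmx_diag n (d : 'rV[C]_n) : adjmx (diag_mx d) = diag_mx (map_mx conjC d).
Proof.
apply/matrixP=> i j; rewrite !mxE rmorphMn.
by have [->|_] := eqVneq i j; rewrite ?mulr0n.
Qed.

Lemma adjmx_rowsub m p n (f : 'I_p -> 'I_m) (U : 'M[C]_(m, n)) :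
  adjmx (rowsub f U) = colsub f (adjmx U).
Proof. by apply/matrixP=> i j; rewrite !mxE. Qed.

Lemma adjmx_unit n (M : 'M[C]_n) : (adjmx M \in unitmx) = (M \in unitmx).
Proof. by rewrite /adjmx !unitmxE det_tr det_map_mx !unitfE conjC_eq0. Qed.

Lemma adjmx_invmx n (M : 'M[C]_n) : M \in unitmx -> adjmx (invmx M) = invmx (adjmx M).
Proof.
move=> uM; have uMadj : adjmx M \in unitmx by rewrite adjmx_unit.
by rewrite -[LHS]mul1mx -(mulVmx uMadj) -mulmxA -adjmxM mulVmx // adjmx1 mulmx1.
Qed.

Lemma hermitian_adjmxP n (H : 'M[C]_n) : reflect (adjmx H = H) (H \is hermsymmx).
Proof.
by rewrite adjmxE; apply: (iffP (is_hermitianmxP _ _ H)); rewrite expr0 scale1r => /esym.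
Qed.

Lemma unitarymx_adjr n (U : 'M[C]_n) : U \is unitarymx -> U *m adjmx U = 1%:M.
Proof. by move/unitarymxP; rewrite adjmxE. Qed.

Lemma invmx_unitary_adj n (U : 'M[C]_n) : U \is unitarymx -> invmx U = adjmx U.
Proof. by move=> /invmx_unitary ->; rewrite adjmxE. Qed.

Lemma unitarymx_normal n (U : 'M[C]_n) : U \is unitarymx -> U \is normalmx.
Proof. by move=> /unitarymx_adjr UU; apply/normalmxP; rewrite -adjmxE UU (mulmx1C UU). Qed.

Lemma scale_congr_ge0 n (a : C) (G H : 'M[C]_n) : 0 <= a ->
  a *: (G *m H *m adjmx G) = (sqrtC a *: G) *m H *m adjmx (sqrtC a *: G).
Proof.
move=> a_ge0; have sqrt_ge0 : 0 <= sqrtC a by rewrite sqrtC_ge0.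
rewrite adjmxZ (conj_Creal (ger0_real sqrt_ge0)) -!scalemxAl -scalemxAr scalerA.
by rewrite -expr2 sqrtCK.
Qed.

End Adjoint.

Lemma char_poly_similar (R : comUnitRingType) n (P D : 'M[R]_n) : P \in unitmx ->
  char_poly (invmx P *m D *m P) = char_poly D.
Proof.
move=> uP; rewrite /char_poly.
set Q := map_mx polyC P; set Qi := map_mx polyC (invmx P).
have QiQ : Qi *m Q = 1%:M by rewrite -map_mxM mulVmx // map_mx1.
have -> : char_poly_mx (invmx P *m D *m P) = Qi *m char_poly_mx D *m Q.
  rewrite /char_poly_mx !map_mxM mulmxBr mulmxBl -!/Qi -!/Q.
  by rewrite [Qi *m _%:M]scalar_mxC -[_%:M *m Qi *m Q]mulmxA QiQ mulmx1.
by rewrite !det_mulmx mulrAC -det_mulmx QiQ det1 mul1r.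
Qed.

Section Eigencount.
Variable C : numClosedFieldType.

Lemma eigseq_similar_diag n (P : 'M[C]_n) d : P \in unitmx ->
  perm_eq (eigseq (invmx P *m diag_mx d *m P)) [seq d 0 i | i <- enum 'I_n].
Proof.
move=> uP; apply: prod_XsubC_eq; rewrite /eigseq.
case: closed_field_poly_normal => r /=.
rewrite (monicP (char_poly_monic _)) scale1r => <-.
rewrite char_poly_similar // char_poly_trig ?diag_mx_is_trig // big_map big_enum /=.
by apply: eq_bigr => i _; rewrite mxE eqxx mulr1n.
Qed.

Lemma eigcount_similar_diag n (P : 'M[C]_n) d (Q : pred C) : P \in unitmx ->
  eigcount (invmx P *m diag_mx d *m P) Q = #|[set i | Q (d 0 i)]|.
Proof.
move=> uP; rewrite /eigcount (permP (eigseq_similar_diag d uP)) count_map.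
rewrite enumT cardsE cardE /enum_mem size_filter.
by apply: eq_count => i; rewrite inE.
Qed.

Lemma eigcount_normal n (S : 'M[C]_n) (Q : pred C) : S \is normalmx ->
  eigcount S Q = #|[set i | Q (spectral_diag S 0 i)]|.
Proof. by move/orthomx_spectralP => {1}->; apply/eigcount_similar_diag/spectral_unit. Qed.

Definition imag_part n (S : 'M[C]_n) := (2%:R * 'i)^-1 *: (S - adjmx S).

Lemma eigcount_imag_part n (S : 'M[C]_n) (Q : pred C) : S \is normalmx ->
  eigcount (imag_part S) Q = eigcount S (fun z => Q ('Im z)).
Proof.
move=> nS; have /orthomx_spectralP ES := nS.
have uW := spectral_unitarymx S.
set W := spectralmx S in ES uW; set s := spectral_diag S in ES.
have -> : imag_part S = invmx W *m diag_mx (map_mx (@Im C) s) *m W.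
  rewrite /imag_part ES !adjmxM adjmx_diag invmx_unitary_adj // adjmxK.
  rewrite -!mulmxA -mulmxBr -mulmxBl scalemxAr scalemxAl; congr (_ *m (_ *m _)).
  apply/matrixP=> i j; rewrite !mxE; have [_|_] := eqVneq i j; last by rewrite !mulr0n subr0 mulr0.
  by rewrite ImE invfM invCi !mulr1n; ring.
rewrite [RHS]eigcount_normal // eigcount_similar_diag ?unitarymx_unit //.
by apply: eq_card => i; rewrite !inE mxE.
Qed.

End Eigencount.

Lemma capmx_neq0 (F : fieldType) m1 m2 n (X1 : 'M[F]_(m1, n)) (X2 : 'M[F]_(m2, n)) :
  (n < \rank X1 + \rank X2)%N -> (X1 :&: X2)%MS != 0.
Proof.
rewrite -mxrank_eq0 -lt0n -mxrank_sum_cap => lt_n.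
by have := rank_leq_col (X1 + X2)%MS; lia.
Qed.

Section Inertia.
Variable C : numClosedFieldType.

Definition qform n (H : 'M[C]_n) (v : 'rV[C]_n) : C := (v *m H *m adjmx v) 0 0.

Lemma qform_congr n (G H : 'M[C]_n) v : qform (G *m H *m adjmx G) v = qform H (v *m G).
Proof. by rewrite /qform adjmxM !mulmxA. Qed.

Lemma qform_hermitian_conj n (H : 'M[C]_n) v : adjmx H = H -> (qform H v)^* = qform H v.
Proof.
move=> hH; rewrite /qform.
have -> : ((v *m H *m adjmx v) 0 0)^* = adjmx (v *m H *m adjmx v) 0 0 by rewrite !mxE.
by rewrite !adjmxM adjmxK hH mulmxA.
Qed.

Lemma rowsub_unitary p n (U : 'M[C]_n) (f : 'I_p -> 'I_n) :
  U \is unitarymx -> injective f -> rowsub f U \is unitarymx.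
Proof.
move=> uU injf; apply/unitarymxP; rewrite -adjmxE adjmx_rowsub.
rewrite mul_rowsub_mx mulmx_colsub unitarymx_adjr //.
by apply/matrixP => i j; rewrite !mxE (inj_eq injf).
Qed.

Lemma qform_unitary_diag_rowsub p n (U : 'M[C]_n) (f : 'I_p -> 'I_n) d x :
  U \is unitarymx -> injective f ->
  qform (adjmx U *m diag_mx d *m U) (x *m rowsub f U) =
  \sum_i d 0 (f i) * (x 0 i * (x 0 i)^*).
Proof.
move=> uU injf; rewrite /qform adjmxM adjmx_rowsub.
have -> : x *m rowsub f U *m (adjmx U *m diag_mx d *m U) *m (colsub f (adjmx U) *m adjmx x)
   = x *m (rowsub f (U *m adjmx U) *m diag_mx d *m colsub f (U *m adjmx U)) *m adjmx x.
  by rewrite -mulmx_colsub -mul_rowsub_mx !mulmxA.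
rewrite unitarymx_adjr // mul_rowsub_mx mul1mx -mxsub_mul mulmx1.
have -> : mxsub f f (diag_mx d) = diag_mx (\row_i d 0 (f i)).
  by apply/matrixP => i j; rewrite !mxE (inj_eq injf).
rewrite mul_mx_diag !mxE; apply: eq_bigr => i _; rewrite !mxE.
by rewrite mulrAC mulrC.
Qed.

Lemma weighted_norm_gt0 p (w : 'I_p -> C) (x : 'rV[C]_p) :
  (forall i, 0 < w i) -> x != 0 -> 0 < \sum_i w i * (x 0 i * (x 0 i)^*).
Proof.
move=> w_gt0 x0.
have ge0 i : 0 <= w i * (x 0 i * (x 0 i)^*) := mulr_ge0 (ltW (w_gt0 i)) (mul_conjC_ge0 _).
rewrite lt_def sumr_ge0 ?andbT => [|i _]; last exact: ge0.
apply: contra x0 => /eqP /(psumr_eq0P (fun i _ => ge0 i)) F0.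
apply/eqP/rowP => i; rewrite mxE; apply/eqP.
by move: (F0 i isT) => /eqP; rewrite mulf_eq0 (negPf (lt0r_neq0 (w_gt0 i))) mul_conjC_eq0.
Qed.

Lemma unitary_diag_congr_card_gt0_le n (U V G : 'M[C]_n) (d e : 'rV[C]_n) :
  U \is unitarymx -> V \is unitarymx -> G \in unitmx ->
  (forall i, d 0 i \is Num.real) ->
  adjmx V *m diag_mx e *m V = G *m (adjmx U *m diag_mx d *m U) *m adjmx G ->
  leq #|[set i | 0 < e 0 i]| #|[set i | 0 < d 0 i]|.
Proof.
move=> uU uV uG dR EH.
set Je := [set i | 0 < e 0 i]; set Kd := ~: [set i | 0 < d 0 i].
rewrite leqNgt; apply/negP => lt_de.
pose fe : 'I_#|Je| -> 'I_n := enum_val; pose fd : 'I_#|Kd| -> 'I_n := enum_val.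
set X1 := rowsub fe V; set X2 := rowsub fd U *m invmx G.
have rX1 : \rank X1 = #|Je| by apply/mxrank_unitary/rowsub_unitary/enum_val_inj.
have rX2 : \rank X2 = #|Kd|.
  rewrite mxrankMfree ?row_free_unit ?unitmx_inv //.
  exact/mxrank_unitary/rowsub_unitary/enum_val_inj.
have cap_neq0 : (X1 :&: X2)%MS != 0.
  apply: capmx_neq0; rewrite rX1 rX2.
  by have := cardsC [set i | 0 < d 0 i]; rewrite card_ord -/Kd; lia.
(* v spans part of the positive eigenspace of e and of the G-image of the nonpositive one of d. *)
set v := nz_row (X1 :&: X2)%MS.
have v_neq0 : v != 0 by rewrite nz_row_eq0.
have [x vx] : exists x, v = x *m X1.
  by apply/submxP; apply: submx_trans (nz_row_sub _) (capmxSl _ _).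
have [y vy] : exists y, v = y *m X2.
  by apply/submxP; apply: submx_trans (nz_row_sub _) (capmxSr _ _).
have qv_gt0 : 0 < qform (adjmx V *m diag_mx e *m V) v.
  rewrite vx qform_unitary_diag_rowsub //; last exact: enum_val_inj.
  apply: weighted_norm_gt0 => [i|]; first by have := enum_valP i; rewrite inE.
  by apply: contraNneq v_neq0 => x0; rewrite vx x0 mul0mx.
have qv_le0 : qform (adjmx V *m diag_mx e *m V) v <= 0.
  rewrite EH qform_congr vy /X2 mulmxA mulmxKV //.
  rewrite qform_unitary_diag_rowsub //; last exact: enum_val_inj.
  apply: sumr_le0 => i _; apply: mulr_le0_ge0 (mul_conjC_ge0 _).
  by have := enum_valP i; rewrite !inE real_leNgt ?real0 ?dR.
by have := lt_le_trans qv_gt0 qv_le0; rewrite ltxx.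
Qed.

Lemma card_sign_real n (d : 'rV[C]_n) : (forall i, d 0 i \is Num.real) ->
  (#|[set i | (0 < d 0 i)%R]| + #|[set i | (d 0 i < 0)%R]|
   + #|[set i | (d 0 i == 0)%R]|)%N = n.
Proof.
move=> dR; rewrite -cardsUI.
have -> : [set i | 0 < d 0 i] :&: [set i | d 0 i < 0] = set0.
  by apply/setP => i; rewrite !inE; apply/negP => /andP [/lt_trans h /h]; rewrite ltxx.
have -> : [set i | 0 < d 0 i] :|: [set i | d 0 i < 0] = ~: [set i | d 0 i == 0].
  by apply/setP => i; rewrite !inE (real_neqr_lt (dR i) (real0 _)) orbC.
by rewrite cards0 addn0 addnC cardsC card_ord.
Qed.

Lemma unitary_diag_congr_inertia n (U V G : 'M[C]_n) (d e : 'rV[C]_n) :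
  U \is unitarymx -> V \is unitarymx -> G \in unitmx ->
  (forall i, d 0 i \is Num.real) -> (forall i, e 0 i \is Num.real) ->
  adjmx V *m diag_mx e *m V = G *m (adjmx U *m diag_mx d *m U) *m adjmx G ->
  [/\ #|[set i | 0 < e 0 i]| = #|[set i | 0 < d 0 i]|,
      #|[set i | e 0 i < 0]| = #|[set i | d 0 i < 0]| &
      #|[set i | e 0 i == 0]| = #|[set i | d 0 i == 0]|].
Proof.
move=> uU uV uG dR eR EH.
have uGinv : invmx G \in unitmx by rewrite unitmx_inv.
have EHinv : adjmx U *m diag_mx d *m U
           = invmx G *m (adjmx V *m diag_mx e *m V) *m adjmx (invmx G).
  by rewrite EH adjmx_invmx // !mulmxA mulVmx // mul1mx mulmxK // adjmx_unit.
have diag_mxN (f : 'rV[C]_n) : diag_mx (- f) = - diag_mx f.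
  by apply/matrixP => i j; rewrite !mxE mulNrn.
have negE (f : 'rV[C]_n) : [set i | 0 < (- f) 0 i] = [set i | f 0 i < 0].
  by apply/setP => i; rewrite !inE mxE oppr_gt0.
have realN (f : 'rV[C]_n) : (forall i, f 0 i \is Num.real) -> forall i, (- f) 0 i \is Num.real.
  by move=> fR i; rewrite mxE realN.
have pos_le := unitary_diag_congr_card_gt0_le uU uV uG dR EH.
have pos_ge := unitary_diag_congr_card_gt0_le uV uU uGinv eR EHinv.
have neg_le : leq #|[set i | e 0 i < 0]| #|[set i | d 0 i < 0]|.
  rewrite -!negE; apply: (unitary_diag_congr_card_gt0_le uU uV uG (realN _ dR)).
  by rewrite !diag_mxN !(mulmxN, mulNmx) EH.
have neg_ge : leq #|[set i | d 0 i < 0]| #|[set i | e 0 i < 0]|.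
  rewrite -!negE; apply: (unitary_diag_congr_card_gt0_le uV uU uGinv (realN _ eR)).
  by rewrite !diag_mxN !(mulmxN, mulNmx) EHinv.
have pos_eq : #|[set i | 0 < e 0 i]| = #|[set i | 0 < d 0 i]|.
  by apply/eqP; rewrite eqn_leq pos_le pos_ge.
have neg_eq : #|[set i | e 0 i < 0]| = #|[set i | d 0 i < 0]|.
  by apply/eqP; rewrite eqn_leq neg_le neg_ge.
by split=> //; have := card_sign_real dR; have := card_sign_real eR; lia.
Qed.

Lemma hermitian_congr_inertia n (H G : 'M[C]_n) :
  H \is hermsymmx -> G \in unitmx ->
  let K := G *m H *m adjmx G in
  [/\ eigcount K (fun z => 0 < z) = eigcount H (fun z => 0 < z),
      eigcount K (fun z => z < 0) = eigcount H (fun z => z < 0) &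
      eigcount K (fun z => z == 0) = eigcount H (fun z => z == 0)].
Proof.
move=> hH uG K.
have hK : K \is hermsymmx.
  by apply/hermitian_adjmxP; rewrite !adjmxM adjmxK (hermitian_adjmxP _ hH) mulmxA.
have spectral (X : 'M[C]_n) : X \is hermsymmx ->
    X = adjmx (spectralmx X) *m diag_mx (spectral_diag X) *m spectralmx X.
  move=> /hermitian_normalmx /orthomx_spectralP {1}->.
  by rewrite invmx_unitary_adj // spectral_unitarymx.
have real_diag (X : 'M[C]_n) : X \is hermsymmx -> forall i, spectral_diag X 0 i \is Num.real.
  by move=> /hermitian_spectral_diag_real /mxOverP dR i; apply: dR.
rewrite !eigcount_normal ?hermitian_normalmx //.
apply: (unitary_diag_congr_inertia (spectral_unitarymx H) (spectral_unitarymx K) uG);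
  [exact: real_diag | exact: real_diag | by rewrite -!spectral].
Qed.

End Inertia.

Lemma cayley_unitary_imag (C : numClosedFieldType) n (A1 B1 : 'M[C]_n) (c : C) :
  c^* = - c -> A1 + c *: B1 = 1%:M -> adjmx (A1 *m adjmx B1) = A1 *m adjmx B1 ->
  let S := - (A1 - c *: B1) in
  S *m adjmx S = 1%:M /\ S - adjmx S = (c *+ 4) *: (A1 *m adjmx B1).
Proof.
move=> cc sum1 herm S.
have eA : A1 = 1%:M - c *: B1 by rewrite -sum1 addrK.
have eS : S = (c *+ 2) *: B1 - 1%:M by rewrite /S eA; apply/matrixP => i j; rewrite !mxE; ring.
have eSadj : adjmx S = - (c *+ 2) *: adjmx B1 - 1%:M.
  by rewrite eS adjmxB adjmx1 adjmxZ rmorphMn /= cc mulNrn.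
have eH : A1 *m adjmx B1 = adjmx B1 - c *: (B1 *m adjmx B1).
  by rewrite eA mulmxBl mul1mx -scalemxAl.
move: herm; rewrite [in LHS]eH adjmxB adjmxK adjmxZ cc scaleNr opprK adjmxM adjmxK eH.
set X := B1 *m adjmx B1; set Bs := adjmx B1 => herm.
(* Once Bs is eliminated both identities are linear in B1 and X, so ring checks them entrywise. *)
have eBs : Bs = B1 + c *: X + c *: X by rewrite herm subrK.
split.
  rewrite eSadj eS mulmxBl mulmxBr !mulmxBr !mul1mx !mulmx1 -!scalemxAl -!scalemxAr -/X.
  by rewrite -/Bs eBs; clearbody X; apply/matrixP => i j; rewrite !mxE; ring.
by rewrite eSadj eS -/X -/Bs eBs; clearbody X; apply/matrixP => i j; rewrite !mxE; ring.
Qed.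

Section ScatteringMatrix.
Variables (C : numClosedFieldType) (n : nat) (A B : 'M[C]_n) (k : C).
Hypotheses (AB_iso : max_isotropic_data A B) (k_real : k \is Num.real) (k_neq0 : k != 0).

Local Notation G := (invmx (A + ('i * k) *: B)).

Lemma conj_ik : ('i * k)^* = - ('i * k).
Proof. by rewrite rmorphM /= conjCi (conj_Creal k_real) mulNr. Qed.

Lemma max_isotropic_unitmx : A + ('i * k) *: B \in unitmx.
Proof.
have [rk hAB] := AB_iso; have cc := conj_ik; set c := 'i * k in cc *.
have c_neq0 : c != 0 by rewrite mulf_neq0 ?neq0Ci.
rewrite -row_free_unit -kermx_eq0; apply/idPn => ker_neq0.
set w := nz_row (kermx (A + c *: B)).
have w_neq0 : w != 0 by rewrite nz_row_eq0.
have wA : w *m A = - c *: (w *m B).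
  have /sub_kermxP := nz_row_sub (kermx (A + c *: B)).
  by rewrite mulmxDr -scalemxAr -/w => /eqP; rewrite addr_eq0 scaleNr => /eqP.
set u := w *m B.
have qw : qform (A *m adjmx B) w = - c * dotmx u u.
  by rewrite /qform mulmxA wA -!scalemxAl mxE -mulmxA -adjmxM dotmxE adjmxE.
have u0 : u = 0.
  have d_conj : (dotmx u u)^* = dotmx u u by apply/conj_Creal/ger0_real/dnorm_ge0.
  have := qform_hermitian_conj w hAB; rewrite qw rmorphM rmorphN /= cc opprK d_conj.
  move=> /eqP; rewrite mulNr -subr_eq0 opprK -mulrDr mulf_eq0 (negPf c_neq0) /=.
  by rewrite -mulr2n mulrn_eq0 /= dnorm_eq0 => /eqP.
have : w *m row_mx A B == 0 by rewrite mul_mx_row wA -/u u0 scaler0 row_mx0.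
by rewrite mulmx_free_eq0 ?(negPf w_neq0) // /row_free rk.
Qed.

Lemma Smat_cayley : let S := Smat A B k in
  S *m adjmx S = 1%:M /\ S - adjmx S = (('i * k) *+ 4) *: (G *m (A *m adjmx B) *m adjmx G).
Proof.
have [_ hAB] := AB_iso; have cc := conj_ik; set c := 'i * k in cc *.
have sum1 : G *m A + c *: (G *m B) = 1%:M.
  by rewrite scalemxAr -mulmxDr mulVmx // max_isotropic_unitmx.
have eH : G *m A *m adjmx (G *m B) = G *m (A *m adjmx B) *m adjmx G by rewrite adjmxM !mulmxA.
have herm : adjmx (G *m A *m adjmx (G *m B)) = G *m A *m adjmx (G *m B).
  by rewrite eH adjmxM adjmxK adjmxM hAB mulmxA.
have -> : Smat A B k = - (G *m A - c *: (G *m B)) by rewrite /Smat mulmxBr scalemxAr.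
by rewrite -eH; apply: cayley_unitary_imag.
Qed.

Lemma Smat_unitary : Smat A B k \is unitarymx.
Proof. by apply/unitarymxP; rewrite -adjmxE; case: Smat_cayley. Qed.

Lemma imag_part_Smat : imag_part (Smat A B k) = (k *+ 2) *: (G *m (A *m adjmx B) *m adjmx G).
Proof.
rewrite /imag_part; case: Smat_cayley => _ ->; rewrite scalerA; congr (_ *: _).
by field; exact: neq0Ci.
Qed.

End ScatteringMatrix.

Theorem proposition3p4 (C : numClosedFieldType) (n : nat) (A B : 'M[C]_n) (k : C) :
  max_isotropic_data A B -> k \is Num.real -> 0 < k ->
  [/\ eigcount (Smat A B k) (fun z => 0 < 'Im z) = n_plus A B,
      eigcount (Smat A B k) (fun z => 'Im z < 0) = n_minus A B &
      eigcount (Smat A B k) (fun z => z \is Num.real) = n_zero A B].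
Proof.
move=> AB_iso k_real k_gt0; have k_neq0 := lt0r_neq0 k_gt0.
have hAB : A *m adjmx B \is hermsymmx by apply/hermitian_adjmxP; case: AB_iso.
have nS := unitarymx_normal (Smat_unitary AB_iso k_real k_neq0).
set G := sqrtC (k *+ 2) *: invmx (A + ('i * k) *: B).
have uG : G \in unitmx.
  by rewrite unitmxZ ?unitmx_inv ?max_isotropic_unitmx // unitfE sqrtC_eq0 mulrn_eq0.
have imS : imag_part (Smat A B k) = G *m (A *m adjmx B) *m adjmx G.
  by rewrite imag_part_Smat // scale_congr_ge0 // ltW // pmulrn_lgt0.
have [pos neg zero] := hermitian_congr_inertia hAB uG.
rewrite -imS !eigcount_imag_part // in pos neg zero.
split=> //; rewrite /n_zero -zero; apply: eq_count => z.
by apply/Creal_ImP/eqP.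
Qed.
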